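(* Let $c>0$ and let $\boldsymbol\rho=(\rho_j)_{j\ge1}$ be a nonnegative sequence. Let $(\mathbb A_{\boldsymbol\nu,\lambda})_{\boldsymbol\nu\in\mathscr F,\lambda\in\mathbb N_0}$ be real numbers with $\mathbb A_{\boldsymbol\nu,0}=\delta_{\boldsymbol\nu,\boldsymbol 0}$, $\mathbb A_{\boldsymbol\nu,\lambda}=0$ for $\lambda>|\boldsymbol\nu|$, and otherwise $$\mathbb A_{\boldsymbol\nu+\boldsymbol e_j,\lambda}\le\sum_{\boldsymbol m\le\boldsymbol\nu}\binom{\boldsymbol\nu}{\boldsymbol m}c\,\boldsymbol\rho^{\boldsymbol\nu-\boldsymbol m+\boldsymbol e_j}(|\boldsymbol\nu|-|\boldsymbol m|+2)!\,\mathbb A_{\boldsymbol m,\lambda-1},\qquad j\ge1.$$ Then for all $\boldsymbol\nu\ne\boldsymbol0$ and $1\le\lambda\le|\boldsymbol\nu|$, $$\mathbb A_{\boldsymbol\nu,\lambda}\le c^\lambda\boldsymbol\rho^{\boldsymbol\nu}\sum_{k=1}^\lambda\frac{(-1)^{\lambda+k}(|\boldsymbol\nu|+2k-1)!}{(2k-1)!\,(\lambda-k)!\,k!}.$$ Moreover, if both inequalities in the recursion are replaced by equalities, then the conclusion holds with equality.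
   Context: $\mathscr F$ is the set of finitely supported multi-indices $\boldsymbol\nu\in\mathbb N_0^{\mathbb N}$, $|\boldsymbol\nu|=\sum_j\nu_j$, $\boldsymbol e_j$ is the $j$-th unit multi-index, $\boldsymbol m\le\boldsymbol\nu$ means $m_j\le\nu_j$ for all $j$, $\binom{\boldsymbol\nu}{\boldsymbol m}=\prod_j\binom{\nu_j}{m_j}$, $\boldsymbol\rho^{\boldsymbol\nu}=\prod_j\rho_j^{\nu_j}$, and $\delta$ is the Kronecker delta. *)

(* Multi-indices are finite sequences of naturals without
   trailing zeros (canonical representatives of finitely supported
   multi-indices); coordinate j (0-based) of nu is nth 0 nu j. *)
From mathcomp Require Import all_boot all_order all_algebra.
Set Implicit Arguments. Unset Strict Implicit. Unset Printing Implicit Defensive.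
Import Order.TTheory GRing.Theory Num.Theory.

Fixpoint trim (s : seq nat) : seq nat :=
  match s with
  | [::] => [::]
  | a :: t => let t' := trim t in
              if (a == 0%N) && (t' == [::]) then [::] else a :: t'
  end.

Definition canon (s : seq nat) : bool := last 1%N s != 0%N.

Lemma trim_canon s : canon (trim s).
Proof.
rewrite /canon; elim: s => [|a t IH] //=.
move: IH; case: (trim t) => [|b u] /= IH; first by case: a.
by rewrite andbF /=.
Qed.

Definition mi := {s : seq nat | canon s}.

Definition mk (s : seq nat) : mi := exist _ (trim s) (trim_canon s).

(* nu_j  (0-based index j stands for the paper's coordinate j+1) *)
Definition coord (nu : mi) (j : nat) : nat := nth 0%N (sval nu) j.

Definition mabs (nu : mi) : nat := sumn (sval nu).

Definition mzero : mi := mk [::].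

Definition addE (nu : mi) (j : nat) : mi := mk (incr_nth (sval nu) j).

(* nu - m (coordinatewise; used only when m <= nu) *)
Definition msub (nu m : mi) : mi :=
  mk [seq (coord nu i - coord m i)%N | i <- iota 0 (maxn (size (sval nu)) (size (sval m)))].

Definition mle (m nu : mi) : Prop := forall j, (coord m j <= coord nu j)%N.

Fixpoint below (s : seq nat) : seq (seq nat) :=
  match s with
  | [::] => [:: [::]]
  | a :: t => [seq i :: u | i <- iota 0 a.+1, u <- below t]
  end.

(* the list of all multi-indices m <= nu, each exactly once *)
Definition mbelow (nu : mi) : seq mi := map mk (below (sval nu)).

Definition mbinom (nu m : mi) : nat :=
  (\prod_(j < maxn (size (sval nu)) (size (sval m))) 'C(coord nu j, coord m j))%N.

Local Open Scope ring_scope.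

Definition mpow {R : comRingType} (rho : nat -> R) (nu : mi) : R :=
  \prod_(j < size (sval nu)) rho j ^+ coord nu j.

From mathcomp Require Import all_boot all_order all_algebra.
From mathcomp Require Import zify ring.
Set Implicit Arguments. Unset Strict Implicit. Unset Printing Implicit Defensive.
Import Order.TTheory GRing.Theory Num.Theory.

(* The candidate  B(nu, lam) = c^lam rho^nu H(lam, |nu|)  satisfies the recursion with
   equality.  Indeed rho^(nu - m + e_j) rho^m = rho^nu rho_j does not depend on m, so by the
   multivariate Vandermonde identity the sum over m <= nu only depends on |m| and becomes
   sum_i C(n, i) (n - i + 2)! H(lam - 1, i), which equals H(lam, n + 1) by a negative
   Vandermonde convolution.  B also has the prescribed values at lam = 0 and vanishes for
   lam > |nu|, so induction on lam gives A = B under equalities and A <= B under inequalities,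
   the coefficients of the recursion being nonnegative. *)

Lemma negative_Vandermonde (m n p : nat) :
  \sum_(i < n.+1) 'C(n - i + p, p) * 'C(i + m - 1, i) = 'C(n + m + p, n).
Proof.
elim: n p => [|n IHn] p; first by rewrite big_ord1 /= !bin0 subnn add0n binn.
elim: p => [|p IHp].
  have sum_p0 k : \sum_(i < k.+1) 'C(k - i + 0, 0) * 'C(i + m - 1, i)
                  = \sum_(i < k.+1) 'C(i + m - 1, i).
    by apply: eq_bigr => i _; rewrite bin0 mul1n.
  rewrite sum_p0 big_ord_recr /= -sum_p0 IHn !addn0.
  have -> : (n.+1 + m - 1 = n + m) by lia.
  by rewrite addSn binS addnC.
rewrite big_ord_recr /= subnn add0n binn mul1n.
rewrite (eq_bigr (fun i : 'I_n.+1 => 'C(n - i + p.+1, p.+1) * 'C(i + m - 1, i)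
      + 'C(n - i + p.+1, p) * 'C(i + m - 1, i))); last first.
  move=> i _; have := ltn_ord i => lt_i_n.
  have -> : (n.+1 - i + p.+1 = (n - i + p.+1).+1) by lia.
  by rewrite binS mulnDl.
rewrite big_split /= IHn -addnA.
move: IHp; rewrite big_ord_recr /= subnn add0n binn mul1n.
rewrite (eq_bigr (fun i : 'I_n.+1 => 'C(n - i + p.+1, p) * 'C(i + m - 1, i))); last first.
  by move=> i _; have := ltn_ord i => lt_i_n; have -> : (n.+1 - i + p = n - i + p.+1) by lia.
move=> ->.
have -> : (n.+1 + m + p.+1 = (n + m + p.+1).+1) by lia.
rewrite binS addnC; congr (_ + _); congr 'C(_, _); lia.
Qed.

Lemma bin_fact_sub2 (n i : nat) : i <= n ->
  'C(n, i) * (n - i + 2)`! * i`! = 2 * n`! * 'C(n - i + 2, 2).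
Proof.
move=> le_i_n.
rewrite -(bin_fact le_i_n) -(bin_fact (leq_addl (n - i) 2)) addnK.
rewrite (_ : 2`! = 2) //.
set a := 'C(n, i); set b := 'C(_, 2); set x := i`!; set y := (n - i)`!.
clearbody a b x y; nia.
Qed.

Lemma bin_fact_shift (n l k : nat) :
  (n.+1)`! * l`! * 'C(l.+1, k.+1) * 'C(n + 2 * k + 2, n.+1) =
  2 * n`! * (l.+1)`! * 'C(l, k) * 'C(n + 2 * k + 2, n).
Proof.
have upper := mul_bin_left (n + 2 * k + 2) n.
have lower := mul_bin_diag l.+1 k.
rewrite (_ : (n + 2 * k + 2 - n = 2 * k.+1)) in upper; last by lia.
rewrite /= in lower; rewrite !factS.
set A := 'C(l.+1, k.+1) in lower *; set B := 'C(n + 2 * k + 2, n.+1) in upper *.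
set C := 'C(l, k) in lower *; set D := 'C(n + 2 * k + 2, n) in upper *.
transitivity (n`! * l`! * A * (n.+1 * B)); first by ring.
rewrite upper; transitivity (2 * n`! * l`! * D * (k.+1 * A)); first by ring.
by rewrite -lower; ring.
Qed.

Lemma nth_trim s j : nth 0 (trim s) j = nth 0 s j.
Proof.
elim: s j => [|a t IH] j //=.
case: ifP => [/andP[/eqP -> /eqP trim_t] | _]; last by case: j.
by case: j => [|j] //=; rewrite -IH trim_t nth_nil.
Qed.

Lemma sumn_trim s : sumn (trim s) = sumn s.
Proof.
elim: s => [|a t IH] //=.
by case: ifP => [/andP[/eqP -> /eqP trim_t] | _] /=; rewrite -IH ?trim_t.
Qed.

Lemma size_trim s : size (trim s) <= size s.
Proof. by elim: s => [|a t IH] //=; case: ifP. Qed.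

Lemma coord_mk s j : coord (mk s) j = nth 0 s j.
Proof. exact: nth_trim. Qed.

Lemma mabs_mk s : mabs (mk s) = sumn s.
Proof. exact: sumn_trim. Qed.

Lemma size_mi_le (x : mi) N : (forall i, N <= i -> coord x i = 0) -> size (sval x) <= N.
Proof.
case: x => s; rewrite /canon /coord /= => s_canon x_supp.
case: (leqP (size s) N) => // lt_N_s.
have := x_supp (size s).-1; rewrite nth_last.
move: s_canon; case: s lt_N_s {x_supp} => [|a t] //= lt_N_s /eqP last_neq0 last_eq0.
by case: last_neq0; apply: last_eq0; rewrite -ltnS.
Qed.

Lemma mi_ext (a b : mi) : (forall j, coord a j = coord b j) -> a = b.
Proof.
move=> eq_ab.
have size_ab : size (sval a) = size (sval b).
  apply/eqP; rewrite eqn_leq; apply/andP; split; apply: size_mi_le => i le_i.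
    by rewrite eq_ab /coord nth_default.
  by rewrite -eq_ab /coord nth_default.
case: a b eq_ab size_ab => s s_canon [t t_canon] /= eq_st size_st.
have eq_s_t : s = t by apply: (eq_from_nth (x0 := 0)) size_st _ => i _; exact: eq_st.
by subst t; congr exist; exact: bool_irrelevance.
Qed.

Lemma coord_addE nu j i : coord (addE nu j) i = coord nu i + (i == j).
Proof. by rewrite /addE coord_mk nth_incr_nth addnC eq_sym. Qed.

Lemma coord_msub nu m i : coord (msub nu m) i = coord nu i - coord m i.
Proof.
rewrite /msub coord_mk.
case: (ltnP i (maxn (size (sval nu)) (size (sval m)))) => [lt_i|].
  by rewrite (nth_map 0) ?size_iota // nth_iota.
rewrite geq_max => /andP[le_nu le_m].
by rewrite nth_default ?size_map ?size_iota ?geq_max ?le_nu // /coord !nth_default.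
Qed.

Lemma coord_mzero i : coord mzero i = 0.
Proof. by rewrite coord_mk nth_nil. Qed.

Lemma sumn_incr_nth s j : sumn (incr_nth s j) = (sumn s).+1.
Proof.
elim: s j => [|a t IH] [|j] //=; last by rewrite IH addnS.
by elim: j.
Qed.

Lemma mabs_addE nu j : mabs (addE nu j) = (mabs nu).+1.
Proof. by rewrite /addE mabs_mk sumn_incr_nth. Qed.

Lemma coord_le_mabs nu i : coord nu i <= mabs nu.
Proof.
rewrite /coord /mabs; case: nu => s _ /=.
elim: s i => [|a t IH] [|i] //=; first exact: leq_addr.
exact: leq_trans (IH i) (leq_addl _ _).
Qed.

Lemma mabs_eq0 nu : (mabs nu == 0) = (nu == mzero).
Proof.
apply/eqP/eqP => [mabs0 | -> //]; apply: mi_ext => i.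
by have := coord_le_mabs nu i; rewrite mabs0 coord_mzero; lia.
Qed.

Lemma mi_neq0_addE m : m != mzero -> exists nu j, m = addE nu j.
Proof.
rewrite -mabs_eq0 -lt0n => mabs_gt0.
have has_pos : has (leq 1) (sval m).
  by move: mabs_gt0; rewrite /mabs; elim: (sval m) => [|[|a] t IH] //= /IH.
set j := find (leq 1) (sval m).
have coord_j_gt0 : 0 < coord m j := nth_find 0 has_pos.
have lt_j : j < size (sval m) by rewrite -has_find.
exists (mk [seq coord m i - (i == j) | i <- iota 0 (size (sval m))]), j.
apply: mi_ext => i; rewrite coord_addE coord_mk.
case: (ltnP i (size (sval m))) => [lt_i | le_i].
  rewrite (nth_map 0) ?size_iota // nth_iota // add0n.
  by case: eqP => [->|_]; rewrite ?subnK // !addn0 subn0.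
rewrite nth_default ?size_map ?size_iota // /coord nth_default //.
by case: eqP => // eq_ij; move: lt_j le_i; rewrite -eq_ij; lia.
Qed.

Lemma mem_below s u : u \in below s ->
  size u = size s /\ forall i, nth 0 u i <= nth 0 s i.
Proof.
elim: s u => [|a t IH] u; first by rewrite inE => /eqP ->; split => // i; rewrite nth_nil.
rewrite (_ : below (a :: t) = [seq i :: u | i <- iota 0 a.+1, u <- below t]) //.
case/allpairsPdep => i [v [i_in /IH[size_v le_v] ->]].
split => [|[|k] //=]; first by rewrite /= size_v.
by move: i_in; rewrite mem_iota.
Qed.

Lemma mle_below nu u : u \in below (sval nu) -> mle (mk u) nu.
Proof. by case/mem_below => _ le_u i; rewrite coord_mk. Qed.

Local Open Scope ring_scope.

Section BinomialTransform.

Variable R : pzSemiRingType.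

Definition binsum (n : nat) (g : nat -> R) : R := \sum_(i < n.+1) 'C(n, i)%:R * g i.

Lemma binsumS n (g : nat -> R) : binsum n.+1 g = binsum n g + binsum n (fun i => g i.+1).
Proof.
rewrite /binsum big_ord_recl [in RHS]big_ord_recl /= !bin0.
rewrite (eq_bigr (fun i : 'I_n.+1 => 'C(n, i.+1)%:R * g i.+1 + 'C(n, i)%:R * g i.+1));
  last by move=> i _; rewrite /bump leq0n add1n binS natrD mulrDl.
rewrite big_split /= addrA; congr (_ + _); congr (_ + _).
by rewrite big_ord_recr /= bin_small ?mul0r ?addr0.
Qed.

Lemma binsum_binsum a b (g : nat -> R) :
  binsum a (fun i => binsum b (fun k => g (i + k)%N)) = binsum (a + b) g.
Proof.
elim: a g => [|a IH] g.
  by rewrite /binsum big_ord1 bin0 mul1r; apply: eq_bigr => i _.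
rewrite binsumS IH.
rewrite (_ : binsum a _ = binsum (a + b) (fun x => g x.+1)); last first.
  by rewrite -IH; apply: eq_bigr => i _; congr (_ * _); apply: eq_bigr => k _; rewrite addSn.
by rewrite addSn binsumS.
Qed.

Definition prod_bin (s u : seq nat) : nat := \prod_(j < size s) 'C(nth 0 s j, nth 0 u j).

(* [below s] enumerates the u <= s, so this is the multivariate Vandermonde identity. *)
Lemma sum_below_prod_bin s (g : nat -> R) :
  \sum_(u <- below s) (prod_bin s u)%:R * g (sumn u) = binsum (sumn s) g.
Proof.
elim: s g => [|a t IH] g.
  by rewrite /= big_seq1 /prod_bin big_ord0 /binsum big_ord1 /= bin0.
rewrite (_ : below (a :: t) = [seq i :: u | i <- iota 0 a.+1, u <- below t]) //.
rewrite big_allpairs_dep (_ : iota 0 a.+1 = index_iota 0 a.+1) ?big_mkord; last first.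
  by rewrite /index_iota subn0.
rewrite -binsum_binsum; apply: eq_bigr => i _.
rewrite -IH mulr_sumr; apply: eq_bigr => u _.
by rewrite /prod_bin /= big_ord_recl /= natrM -mulrA.
Qed.

End BinomialTransform.

Lemma mbinom_below nu u : u \in below (sval nu) -> mbinom nu (mk u) = prod_bin (sval nu) u.
Proof.
case/mem_below => size_u _; rewrite /mbinom /prod_bin (maxn_idPl _); last first.
  by rewrite -size_u size_trim.
by apply: eq_bigr => k _; rewrite coord_mk.
Qed.

Lemma natr_fact_neq0 (R : numDomainType) n : (n`!)%:R != 0 :> R.
Proof. by rewrite pnatr_eq0 -lt0n fact_gt0. Qed.

Section Coefficient.

Variable R : numFieldType.

(* For 0 < i this is the sum of the theorem (HcoefE); the finite-difference form is the
   one in which the recursion Hcoef_recursion can be proved. *)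
Definition Hcoef (l i : nat) : R :=
  (i`!)%:R / (l`!)%:R *
  \sum_(k < l.+1) 'C(l, k)%:R * (-1) ^+ (l - k) * 'C(i + 2 * k - 1, i)%:R.

Lemma Hcoef_recursion l n :
  binsum n (fun i => ((n - i + 2)`!)%:R * Hcoef l i) = Hcoef l.+1 n.+1.
Proof.
have fact_l := natr_fact_neq0 R l; have fact_l1 := natr_fact_neq0 R l.+1.
transitivity (2 * (n`!)%:R / (l`!)%:R *
  \sum_(k < l.+1) 'C(l, k)%:R * (-1) ^+ (l - k) * 'C(n + 2 * k + 2, n)%:R : R).
  rewrite /binsum /Hcoef.
  transitivity (\sum_(i < n.+1) 2 * (n`!)%:R / (l`!)%:R *
     \sum_(k < l.+1) 'C(l, k)%:R * (-1) ^+ (l - k) *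
        ('C(n - i + 2, 2)%:R * 'C(i + 2 * k - 1, i)%:R) : R).
    apply: eq_bigr => i _; rewrite !mulr_sumr; apply: eq_bigr => k _.
    have := bin_fact_sub2 (ltnSE (ltn_ord i)) => /(congr1 (fun x => x%:R : R)).
    rewrite !natrM => weight.
    transitivity ('C(n, i)%:R * (((n - i + 2)`!)%:R * (i`!)%:R) / (l`!)%:R *
       ('C(l, k)%:R * (-1) ^+ (l - k) * 'C(i + 2 * k - 1, i)%:R) : R); first by field.
    by rewrite mulrA weight; field.
  rewrite -mulr_sumr exchange_big /=; congr (_ * _); apply: eq_bigr => k _.
  rewrite -mulr_sumr -(negative_Vandermonde (2 * k) n 2) natr_sum; congr (_ * _).
  by apply: eq_bigr => i _; rewrite natrM.
rewrite /Hcoef [in RHS]big_ord_recl /= (bin_small (m := n.+1)); last by lia.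
rewrite mulr0 add0r !mulr_sumr; apply: eq_bigr => k _.
rewrite /bump leq0n add1n subSS (_ : (n.+1 + 2 * k.+1 - 1 = n + 2 * k + 2)%N); last by lia.
have shift : ((n.+1)`!)%:R * (l`!)%:R * 'C(l.+1, k.+1)%:R * 'C(n + 2 * k + 2, n.+1)%:R =
    2 * (n`!)%:R * ((l.+1)`!)%:R * 'C(l, k)%:R * 'C(n + 2 * k + 2, n)%:R :> R.
  by rewrite -!natrM bin_fact_shift.
set s := (-1) ^+ _; apply: (mulIf fact_l); apply: (mulIf fact_l1).
transitivity (s * (2 * (n`!)%:R * ((l.+1)`!)%:R * 'C(l, k)%:R *
  'C(n + 2 * k + 2, n)%:R)); first by field.
by rewrite -shift; field.
Qed.

Lemma Hcoef0 i : Hcoef 0 i = (i == 0%N)%:R.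
Proof.
rewrite /Hcoef big_ord1 /= fact0 divr1 bin0 expr0 !mul1r muln0 addn0.
by case: i => [|i]; rewrite ?fact0 ?bin0 ?mulr1 // subn1 /= bin_small ?mulr0.
Qed.

Lemma HcoefS0 l : Hcoef l.+1 0 = 0.
Proof.
rewrite /Hcoef (eq_bigr (fun k : 'I_l.+2 => (-1) ^+ (l.+1 - k) * 1 ^+ k *+ 'C(l.+1, k))).
  by rewrite -exprDn addNr expr0n /= mulr0.
by move=> k _; rewrite bin0 mulr1 expr1n mulr1 mulr_natl.
Qed.

Lemma Hcoef_small l n : (n < l)%N -> Hcoef l n = 0.
Proof.
elim: l n => [|l IH] [|n] //; first by rewrite HcoefS0.
rewrite ltnS => lt_n_l; rewrite -Hcoef_recursion /binsum big1 // => i _.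
by rewrite IH ?mulr0 //; have := ltn_ord i; lia.
Qed.

Lemma HcoefE l n : (0 < n)%N ->
  Hcoef l n = \sum_(1 <= k < l.+1)
      (-1) ^+ (l + k) * ((n + 2 * k - 1)`!)%:R /
      (((2 * k - 1)`!)%:R * ((l - k)`!)%:R * (k`!)%:R).
Proof.
move=> n_gt0; rewrite /Hcoef big_ord_recl /= (bin_small (m := n)); last by lia.
rewrite mulr0 add0r big_add1 /= big_mkord mulr_sumr; apply: eq_bigr => k _.
rewrite /bump leq0n add1n.
have le_k_l : (k.+1 <= l)%N by have := ltn_ord k.
set K := k.+1.
rewrite (_ : (n + 2 * K - 1 = n + (2 * K - 1))%N); last by lia.
rewrite -(bin_fact le_k_l) -[(n + _)`!](bin_fact (leq_addr (2 * K - 1) n)) addKn !natrM.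
have -> : (-1) ^+ (l + K) = (-1) ^+ (l - K) :> R.
  rewrite (_ : (l + K = (l - K) + K * 2)%N); last by lia.
  by rewrite exprD exprM sqrr_sign mulr1.
have binK : 'C(l, K)%:R != 0 :> R by rewrite pnatr_eq0 -lt0n bin_gt0.
have := natr_fact_neq0 R K; have := natr_fact_neq0 R (l - K);
have := natr_fact_neq0 R n; have := natr_fact_neq0 R (2 * K - 1).
move=> f1 f2 f3 f4; field; apply/and5P; split => //; first exact: natr_fact_neq0.
by rewrite addrC natr1 pnatr_eq0.
Qed.

End Coefficient.

Section Monomials.

Variables (R : comNzRingType) (rho : nat -> R).

Lemma mpow_widen nu N : (forall i, (N <= i)%N -> coord nu i = 0%N) ->
  mpow rho nu = \prod_(i < N) rho i ^+ coord nu i.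
Proof.
move=> nu_supp; rewrite /mpow -!(big_mkord xpredT (fun i => rho i ^+ coord nu i)).
rewrite (big_cat_nat (leq0n _) (size_mi_le nu_supp)) /= [X in _ * X]big_nat_cond.
by rewrite [X in _ * X]big1 ?mulr1 // => i /andP[/andP[le_i _] _]; rewrite /coord nth_default.
Qed.

Lemma mpow_mzero : mpow rho mzero = 1.
Proof. by rewrite /mpow big_ord0. Qed.

Lemma mpow_addE nu j : mpow rho (addE nu j) = mpow rho nu * rho j.
Proof.
set N := maxn (size (sval nu)) j.+1.
have nu_supp i : (N <= i)%N -> coord nu i = 0%N.
  by rewrite geq_max => /andP[le_i _]; rewrite /coord nth_default.
have lt_j_N : (j < N)%N by rewrite leq_maxr.
rewrite (@mpow_widen _ N) => [|i le_i]; last first.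
  rewrite coord_addE nu_supp //; case: eqP => // eq_ij.
  by move: le_i; rewrite eq_ij leqNgt lt_j_N.
have rho_j : rho j = \prod_(i < N) rho i ^+ (i == j :> nat).
  rewrite (bigD1 (Ordinal lt_j_N)) //= eqxx expr1 big1 ?mulr1 // => i neq_ij.
  by move: neq_ij; rewrite -val_eqE /= => /negbTE ->.
rewrite (mpow_widen nu_supp) rho_j -big_split /=.
by apply: eq_bigr => i _; rewrite coord_addE exprD.
Qed.

Lemma mpow_msub nu m : mle m nu -> mpow rho (msub nu m) * mpow rho m = mpow rho nu.
Proof.
move=> le_m_nu; set N := size (sval nu).
have nu_supp i : (N <= i)%N -> coord nu i = 0%N by move=> le_i; rewrite /coord nth_default.
have m_supp i : (N <= i)%N -> coord m i = 0%N.
  by move=> /nu_supp nu_i; have := le_m_nu i; rewrite nu_i; lia.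
rewrite (mpow_widen m_supp) (@mpow_widen _ N) => [|i /nu_supp nu_i]; last first.
  by rewrite coord_msub nu_i.
by rewrite /mpow -big_split /=; apply: eq_bigr => i _; rewrite coord_msub -exprD subnK.
Qed.

End Monomials.

Lemma mpow_ge0 (R : realFieldType) (rho : nat -> R) nu :
  (forall j, 0 <= rho j) -> 0 <= mpow rho nu.
Proof. by move=> rho_ge0; apply: prodr_ge0 => i _; exact: exprn_ge0. Qed.

Section Bound.

Variables (R : realFieldType) (c : R) (rho : nat -> R).

Definition recsum (A : mi -> nat -> R) (nu : mi) (j lam : nat) : R :=
  \sum_(m <- mbelow nu)
    (mbinom nu m)%:R * c * mpow rho (addE (msub nu m) j) *
    ((mabs nu - mabs m + 2)`!)%:R * A m lam.-1.

Definition bound (nu : mi) (lam : nat) : R := c ^+ lam * mpow rho nu * Hcoef R lam (mabs nu).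

Lemma bound0 nu : bound nu 0 = (nu == mzero)%:R.
Proof.
rewrite /bound Hcoef0 expr0 mul1r mabs_eq0.
by have [->|] := eqVneq nu mzero; rewrite ?mpow_mzero ?mulr1 ?mulr0.
Qed.

Lemma bound_small nu lam : (mabs nu < lam)%N -> bound nu lam = 0.
Proof. by move=> lt_nu_lam; rewrite /bound Hcoef_small ?mulr0. Qed.

Lemma recsum_bound nu j lam : recsum bound nu j lam.+1 = bound (addE nu j) lam.+1.
Proof.
rewrite /recsum /mbelow big_map; set s := sval nu.
have term u : u \in below s ->
    (mbinom nu (mk u))%:R * c * mpow rho (addE (msub nu (mk u)) j) *
    ((mabs nu - mabs (mk u) + 2)`!)%:R * bound (mk u) lam =
    c ^+ lam.+1 * (mpow rho nu * rho j) *
    ((prod_bin s u)%:R * (((sumn s - sumn u + 2)`!)%:R * Hcoef R lam (sumn u))).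
  move=> u_below; rewrite /bound mabs_mk mbinom_below // mpow_addE.
  by rewrite -[mpow rho nu](mpow_msub rho (mle_below u_below)) exprS /mabs -/s; ring.
rewrite (eq_big_seq _ term) -mulr_sumr.
rewrite (sum_below_prod_bin s (fun i => ((sumn s - i + 2)`!)%:R * Hcoef R lam i)).
by rewrite Hcoef_recursion /bound mabs_addE mpow_addE /mabs -/s.
Qed.

Lemma le_bound (A : mi -> nat -> R) : 0 <= c -> (forall j, 0 <= rho j) ->
  (forall nu, A nu 0%N = (nu == mzero)%:R) ->
  (forall nu lam, (mabs nu < lam)%N -> A nu lam = 0) ->
  (forall nu j lam, (0 < lam)%N -> (lam <= mabs (addE nu j))%N ->
     A (addE nu j) lam <= recsum A nu j lam) ->
  forall lam nu, A nu lam <= bound nu lam.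
Proof.
move=> c_ge0 rho_ge0 A0 A_small A_rec; elim=> [|lam IH] nu; first by rewrite A0 bound0.
have [lt_nu|le_nu] := ltnP (mabs nu) lam.+1; first by rewrite A_small // bound_small.
have [mu [j nuE]] : exists mu j, nu = addE mu j.
  by apply: mi_neq0_addE; rewrite -mabs_eq0 -lt0n (leq_trans _ le_nu).
rewrite nuE in le_nu *; apply: le_trans (A_rec _ _ _ (ltn0Sn _) le_nu) _.
rewrite -recsum_bound; apply: ler_sum => m _; apply: ler_wpM2l; last exact: IH.
by rewrite !mulr_ge0 ?mpow_ge0.
Qed.

Lemma eq_bound (A : mi -> nat -> R) :
  (forall nu, A nu 0%N = (nu == mzero)%:R) ->
  (forall nu lam, (mabs nu < lam)%N -> A nu lam = 0) ->
  (forall nu j lam, (0 < lam)%N -> (lam <= mabs (addE nu j))%N ->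
     A (addE nu j) lam = recsum A nu j lam) ->
  forall lam nu, A nu lam = bound nu lam.
Proof.
move=> A0 A_small A_rec; elim=> [|lam IH] nu; first by rewrite A0 bound0.
have [lt_nu|le_nu] := ltnP (mabs nu) lam.+1; first by rewrite A_small // bound_small.
have [mu [j nuE]] : exists mu j, nu = addE mu j.
  by apply: mi_neq0_addE; rewrite -mabs_eq0 -lt0n (leq_trans _ le_nu).
rewrite nuE in le_nu *; rewrite A_rec // -recsum_bound.
by apply: eq_bigr => m _; rewrite IH.
Qed.

Lemma boundE nu lam : (1 <= lam)%N -> (lam <= mabs nu)%N ->
  bound nu lam = c ^+ lam * mpow rho nu *
    \sum_(1 <= k < lam.+1)
      (-1) ^+ (lam + k) * ((mabs nu + 2 * k - 1)`!)%:R /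
      (((2 * k - 1)`!)%:R * ((lam - k)`!)%:R * (k`!)%:R).
Proof. by move=> lam_ge1 le_lam; rewrite /bound HcoefE //; apply: leq_trans le_lam. Qed.

End Bound.

Theorem mainTheorem9 (R : realFieldType) (c : R) (rho : nat -> R) :
  0 < c -> (forall j, 0 <= rho j) ->
  let rhs (nu : mi) (lam : nat) : R :=
    c ^+ lam * mpow rho nu *
    \sum_(1 <= k < lam.+1)
      (-1) ^+ (lam + k) * ((mabs nu + 2 * k - 1)`!)%:R /
      (((2 * k - 1)`!)%:R * ((lam - k)`!)%:R * (k`!)%:R) in
  let recsum (A : mi -> nat -> R) (nu : mi) (j lam : nat) : R :=
    \sum_(m <- mbelow nu)
      (mbinom nu m)%:R * c * mpow rho (addE (msub nu m) j) *
      ((mabs nu - mabs m + 2)`!)%:R * A m lam.-1 in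
  (forall A : mi -> nat -> R,
     (forall nu, A nu 0%N = (nu == mzero)%:R) ->
     (forall nu lam, (mabs nu < lam)%N -> A nu lam = 0) ->
     (forall nu j lam, (0 < lam)%N -> (lam <= mabs (addE nu j))%N ->
        A (addE nu j) lam <= recsum A nu j lam) ->
     forall nu lam, nu != mzero -> (1 <= lam)%N -> (lam <= mabs nu)%N ->
       A nu lam <= rhs nu lam)
  /\
  (forall A : mi -> nat -> R,
     (forall nu, A nu 0%N = (nu == mzero)%:R) ->
     (forall nu lam, (mabs nu < lam)%N -> A nu lam = 0) ->
     (forall nu j lam, (0 < lam)%N -> (lam <= mabs (addE nu j))%N ->
        A (addE nu j) lam = recsum A nu j lam) ->
     forall nu lam, nu != mzero -> (1 <= lam)%N -> (lam <= mabs nu)%N ->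
       A nu lam = rhs nu lam).
Proof.
move=> c_gt0 rho_ge0 rhs recsum_let.
split=> A A0 A_small A_rec nu lam _ lam_ge1 le_lam; rewrite /rhs -boundE //.
  exact: le_bound (ltW c_gt0) rho_ge0 A0 A_small A_rec lam nu.
exact: eq_bound A0 A_small A_rec lam nu.
Qed.
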